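(* Let $\hat h:\mathbb A\to\mathbb R$ be continuous with $\hat h(x,y+1)=\hat h(x,y)+1$, such that every level set $A_\xi=\hat h^{-1}\{\xi\}$, $\xi\in\mathbb R$, is an essential annular continuum, and put $A^\pm_\xi=\partial\mathcal U^\pm(A_\xi)$. If $A_\xi$ is thin, then, in the Hausdorff metric, $\lim_{\xi'\nearrow\xi}A^-_{\xi'}=\lim_{\xi'\nearrow\xi}A_{\xi'}=A^-_\xi$ and $\lim_{\xi'\searrow\xi}A^+_{\xi'}=\lim_{\xi'\searrow\xi}A_{\xi'}=A^+_\xi$.
   Context: $\mathbb A=\mathbb S^1\times\mathbb R$. An essential annular continuum $A\subset\mathbb A$ is a continuum such that $\mathbb A\setminus A$ consists of exactly two connected components, $\mathcal U^+(A)$ unbounded above and $\mathcal U^-(A)$ unbounded below. Thin means empty interior. Hausdorff distance: $d_{\mathcal H}(C,D)=\max\{\sup_{x\in C}d(x,D),\sup_{y\in D}d(y,C)\}$. *)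

From Stdlib Require Import Reals List.
Open Scope R_scope.

(* The open annulus A = S^1 x R is modelled as R x R modulo (x,y) ~ (x+1,y).
   Points are pairs (x,y) : R*R, and we use the pseudometric [d] on R*R that
   is the pullback of the metric on A; subsets of A correspond to subsets of
   R*R (all the sets below that matter are saturated). *)
Definition pt := (R * R)%type.
Definition aset := pt -> Prop.

Definition dcirc (x x' : R) : R :=
  Rmin (frac_part (x - x')) (1 - frac_part (x - x')).

Definition d (p q : pt) : R :=
  Rmax (dcirc (fst p) (fst q)) (Rabs (snd p - snd q)).

Definition is_open (U : aset) : Prop :=
  forall p, U p -> exists e, e > 0 /\ forall q, d p q < e -> U q.

Definition compact (S : aset) : Prop :=
  forall (I : Type) (U : I -> aset),
    (forall i, is_open (U i)) ->
    (forall p, S p -> exists i, U i p) ->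
    exists l : list I, forall p, S p -> exists i, In i l /\ U i p.

Definition connected (S : aset) : Prop :=
  ~ exists U V : aset, is_open U /\ is_open V /\
      (forall p, S p -> U p \/ V p) /\
      (exists p, S p /\ U p) /\ (exists p, S p /\ V p) /\
      (forall p, S p -> U p -> V p -> False).

Definition continuum (S : aset) : Prop :=
  (exists p, S p) /\ compact S /\ connected S.

Definition set_eq (S T : aset) : Prop := forall p, S p <-> T p.
Definition subset (S T : aset) : Prop := forall p, S p -> T p.
Definition compl (S : aset) : aset := fun p => ~ S p.

Definition component (X K : aset) : Prop :=
  (exists p, K p) /\ subset K X /\ connected K /\
  forall K', connected K' -> subset K K' -> subset K' X -> subset K' K.

Definition unbounded_above (S : aset) : Prop :=
  forall M, exists p, S p /\ snd p > M.
Definition unbounded_below (S : aset) : Prop :=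
  forall M, exists p, S p /\ snd p < M.

Definition essential_annular_continuum (A : aset) : Prop :=
  continuum A /\
  exists Up Um : aset,
    component (compl A) Up /\ component (compl A) Um /\
    ~ set_eq Up Um /\
    (forall K, component (compl A) K -> set_eq K Up \/ set_eq K Um) /\
    unbounded_above Up /\ unbounded_below Um.

Definition is_Uplus (A U : aset) : Prop :=
  component (compl A) U /\ unbounded_above U.
Definition is_Uminus (A U : aset) : Prop :=
  component (compl A) U /\ unbounded_below U.

Definition boundary (S : aset) : aset := fun p =>
  forall e, e > 0 ->
    (exists q, d p q < e /\ S q) /\ (exists q, d p q < e /\ ~ S q).

Definition Aplus (A : aset) : aset := fun p =>
  exists U, is_Uplus A U /\ boundary U p.
Definition Aminus (A : aset) : aset := fun p =>
  exists U, is_Uminus A U /\ boundary U p.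

Definition thin (A : aset) : Prop :=
  ~ exists p e, e > 0 /\ forall q, d p q < e -> A q.

Definition dist_le (x : pt) (D : aset) (r : R) : Prop :=
  forall r', r' > r -> exists y, D y /\ d x y < r'.

Definition hausdorff_le (C D : aset) (r : R) : Prop :=
  (forall x, C x -> dist_le x D r) /\ (forall y, D y -> dist_le y C r).

Definition hlim_left (F : R -> aset) (xi : R) (L : aset) : Prop :=
  forall eps, eps > 0 -> exists delta, delta > 0 /\
    forall xi', xi - delta < xi' < xi -> hausdorff_le (F xi') L eps.
Definition hlim_right (F : R -> aset) (xi : R) (L : aset) : Prop :=
  forall eps, eps > 0 -> exists delta, delta > 0 /\
    forall xi', xi < xi' < xi + delta -> hausdorff_le (F xi') L eps.

Definition continuous_on_A (h : pt -> R) : Prop :=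
  forall p eps, eps > 0 -> exists delta, delta > 0 /\
    forall q, d p q < delta -> Rabs (h q - h p) < eps.

Definition level (h : pt -> R) (xi : R) : aset := fun p => h p = xi.

From Stdlib Require Import Reals Lra Lia ZArith List Classical ClassicalEpsilon.
From Coquelicot Require Import Rcomplements.
From Coquelicot Require Compactness Continuity.
Open Scope R_scope.

(** The key observation is that, when every level set [A_c] is an essential
    annular continuum, [U^-(A_c) = {h < c}] and [U^+(A_c) = {h > c}]
    (a connected set avoiding [A_c] has [h - c] of constant sign, and it is
    positive far up since [A_c] is compact).  Hence [A^-_c] is the boundary
    of the sublevel set {h < c}, and the left-hand limits reduce to two
    uniform estimates for c' slightly below c, both obtained from compactness
    of a horizontal band containing the slab {c - 1 <= h <= c}:
    - each point of [A_c'] is close to the boundary of {h < c}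
      ([near_boundary_from_below]);
    - each point of that boundary is close to a point well below level c
      ([boundary_pushdown]), from which one climbs back to level c'
      ([first_crossing]).
    The right-hand limits follow by applying this to p |-> - h (flip p),
    where [flip] reverses the vertical direction.  The argument does not use
    the thinness of [A_c]. *)

(** Metric facts about the annulus.

    Every [d]-distance is realised
    by the sup-distance [de] of the plane between suitable lifts, which lets
    us argue along straight segments of the plane. *)

Lemma frac_unique z (n : Z) f : z = IZR n + f -> 0 <= f < 1 -> frac_part z = f.
Proof. intros E H. now destruct (Int_part_frac_part_spec z n f H E). Qed.

Lemma frac_range z : 0 <= frac_part z < 1.
Proof. destruct (base_fp z). lra. Qed.

Lemma frac_shift z (n : Z) : frac_part (z + IZR n) = frac_part z.
Proof.
  apply (frac_unique _ (Int_part z + n)%Z); [|apply frac_range].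
  rewrite plus_IZR. pose proof (Rplus_Int_part_frac_part z). lra.
Qed.

Lemma frac_opp z :
  frac_part z = 0 /\ frac_part (- z) = 0 \/ frac_part (- z) = 1 - frac_part z.
Proof.
  pose proof (Rplus_Int_part_frac_part z). pose proof (frac_range z).
  destruct (Req_dec (frac_part z) 0) as [Hz|Hz].
  - left. split; [exact Hz|]. apply (frac_unique _ (- Int_part z)%Z); [|lra].
    rewrite opp_IZR. lra.
  - right. apply (frac_unique _ (- Int_part z - 1)%Z); [|lra].
    rewrite minus_IZR, opp_IZR. lra.
Qed.

Lemma dcirc_shift_l a b (n : Z) : dcirc (a + IZR n) b = dcirc a b.
Proof.
  unfold dcirc. replace (a + IZR n - b) with ((a - b) + IZR n) by ring.
  now rewrite frac_shift.
Qed.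

Lemma dcirc_shift_r a b (n : Z) : dcirc a (b + IZR n) = dcirc a b.
Proof.
  unfold dcirc. replace (a - (b + IZR n)) with ((a - b) + IZR (- n))
    by (rewrite opp_IZR; ring).
  now rewrite frac_shift.
Qed.

Lemma dcirc_sym a b : dcirc a b = dcirc b a.
Proof.
  unfold dcirc. replace (b - a) with (- (a - b)) by ring.
  destruct (frac_opp (a - b)) as [[E1 E2]|E]; rewrite ?E1, ?E2, ?E; [easy|].
  unfold Rmin. destruct (Rle_dec _ _), (Rle_dec _ _); lra.
Qed.

Lemma dcirc_le_abs a b : dcirc a b <= Rabs (a - b).
Proof.
  unfold dcirc. set (z := a - b). pose proof (frac_range z).
  pose proof (Rmin_l (frac_part z) (1 - frac_part z)).
  pose proof (Rmin_r (frac_part z) (1 - frac_part z)).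
  destruct (Rle_dec 1 (Rabs z)) as [|Hn]; [lra|]. apply Rnot_le_lt in Hn.
  destruct (Rle_dec 0 z).
  - rewrite Rabs_right in * by lra.
    assert (frac_part z = z) by (apply (frac_unique z 0); simpl; lra). lra.
  - rewrite Rabs_left in * by lra.
    assert (frac_part z = z + 1) by (apply (frac_unique z (-1)); simpl; lra). lra.
Qed.

Lemma dcirc_rep a b : exists n : Z, Rabs (a - (b + IZR n)) = dcirc a b.
Proof.
  unfold dcirc. pose proof (frac_range (a - b)).
  pose proof (Rplus_Int_part_frac_part (a - b)).
  destruct (Rle_dec (frac_part (a - b)) (1 - frac_part (a - b))).
  - exists (Int_part (a - b)). rewrite Rmin_left by lra.
    rewrite Rabs_right; lra.
  - exists (Int_part (a - b) + 1)%Z. rewrite Rmin_right, plus_IZR by lra.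
    rewrite Rabs_left; lra.
Qed.

Lemma dcirc_refl a : dcirc a a = 0.
Proof.
  unfold dcirc. replace (a - a) with 0 by ring. rewrite fp_R0.
  apply Rmin_left; lra.
Qed.

Definition de (p q : pt) : R :=
  Rmax (Rabs (fst p - fst q)) (Rabs (snd p - snd q)).
Definition shx (q : pt) (n : Z) : pt := (fst q + IZR n, snd q).

Lemma d_le_de p q : d p q <= de p q.
Proof.
  unfold d, de. pose proof (dcirc_le_abs (fst p) (fst q)).
  apply Rmax_lub; [eapply Rle_trans; [eassumption|]|]; auto using Rmax_l, Rmax_r.
Qed.

Lemma de_nonneg p q : 0 <= de p q.
Proof. eapply Rle_trans; [apply Rabs_pos|apply Rmax_l]. Qed.

Lemma de_lt p q e :
  Rabs (fst p - fst q) < e -> Rabs (snd p - snd q) < e -> de p q < e.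
Proof. intros. now apply Rmax_lub_lt. Qed.

Lemma d_sym p q : d p q = d q p.
Proof. unfold d. now rewrite dcirc_sym, Rabs_minus_sym. Qed.

Lemma d_refl p : d p p = 0.
Proof.
  unfold d. rewrite dcirc_refl. replace (snd p - snd p) with 0 by ring.
  rewrite Rabs_R0. apply Rmax_left; lra.
Qed.

Lemma d_shift_r p q n : d p (shx q n) = d p q.
Proof. unfold d, shx; simpl. now rewrite dcirc_shift_r. Qed.

Lemma d_shift_l p q n : d (shx p n) q = d p q.
Proof. unfold d, shx; simpl. now rewrite dcirc_shift_l. Qed.

Lemma d_rep p q : exists n, de p (shx q n) = d p q.
Proof.
  destruct (dcirc_rep (fst p) (fst q)) as [n Hn]. exists n.
  unfold de, d, shx; simpl. now rewrite Hn.
Qed.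

Lemma dy_le_d p q : Rabs (snd p - snd q) <= d p q.
Proof. apply Rmax_r. Qed.

Lemma de_tri p q r : de p r <= de p q + de q r.
Proof.
  unfold de.
  pose proof (Rmax_l (Rabs (fst p - fst q)) (Rabs (snd p - snd q))).
  pose proof (Rmax_r (Rabs (fst p - fst q)) (Rabs (snd p - snd q))).
  pose proof (Rmax_l (Rabs (fst q - fst r)) (Rabs (snd q - snd r))).
  pose proof (Rmax_r (Rabs (fst q - fst r)) (Rabs (snd q - snd r))).
  pose proof (Rabs_triang (fst p - fst q) (fst q - fst r)).
  pose proof (Rabs_triang (snd p - snd q) (snd q - snd r)).
  replace (fst p - fst q + (fst q - fst r)) with (fst p - fst r) in * by ring.
  replace (snd p - snd q + (snd q - snd r)) with (snd p - snd r) in * by ring.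
  apply Rmax_lub; lra.
Qed.

(* The triangle inequality for [d]: lift the three points suitably. *)
Lemma d_tri p q r : d p r <= d p q + d q r.
Proof.
  destruct (d_rep p q) as [n Hn]. destruct (d_rep (shx q n) r) as [m Hm].
  rewrite d_shift_l in Hm. rewrite <- Hn, <- Hm, <- (d_shift_r p r m).
  eapply Rle_trans; [apply d_le_de|apply de_tri].
Qed.

(** Compactness of horizontal bands, and connected components. *)

Definition nrm (p : pt) : pt := shx p (- Int_part (fst p)).

Lemma nrm_box p : 0 <= fst (nrm p) <= 1 /\ snd (nrm p) = snd p.
Proof.
  unfold nrm, shx; simpl. rewrite opp_IZR.
  pose proof (base_Int_part (fst p)). split; [lra|easy].
Qed.

(* A Lebesgue number for pointwise radii on a horizontal band, by compactness
   of the band: if every point [t] has some radius [del] with [P t del], then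
   there is a uniform [d0 > 0] such that each point of the band lies within
   some admissible radius [del >= d0] of some [t]. *)
Lemma band_gauge (P : pt -> R -> Prop) M :
  (forall t, exists del, del > 0 /\ P t del) ->
  exists d0, d0 > 0 /\ forall p, Rabs (snd p) <= M ->
    exists t del, P t del /\ d0 <= del /\ d p t < del.
Proof.
  intros HP.
  assert (Hgauge : exists g : R -> R -> posreal, forall u v, P (u, v) (g u v)).
  { exists (fun u v =>
      let s := constructive_indefinite_description _ (HP (u, v)) in
      mkposreal (proj1_sig s) (proj1 (proj2_sig s))).
    intros u v. cbn [pos].
    exact (proj2 (proj2_sig (constructive_indefinite_description _ (HP (u, v))))). }
  destruct Hgauge as [g Hg].
  destruct (Compactness.compactness_value_2d 0 1 (- M) M g) as [d0 Hd0].
  exists d0. split; [apply cond_pos|]. intros p Hp.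
  destruct (nrm_box p) as [Hx Hy]. apply Rabs_le_between in Hp.
  apply NNPP. intros Hno. apply (Hd0 (fst (nrm p)) (snd (nrm p))); [easy|lra|].
  intros [u [v [_ [_ [Hu [Hv Hd]]]]]]. apply Hno.
  exists (u, v), (g u v). split; [apply Hg|]. split; [exact Hd|].
  unfold nrm in *. rewrite <- (d_shift_l p _ (- Int_part (fst p))).
  eapply Rle_lt_trans; [apply d_le_de|]. now apply de_lt.
Qed.

(* Every point of [X] lies in a connected component of [X]: the union of all
   connected subsets of [X] through it. *)
Lemma component_exists (X : aset) p : X p -> exists K, component X K /\ K p.
Proof.
  intros Xp. set (K := fun z => exists C, connected C /\ subset C X /\ C p /\ C z).
  assert (Kp : K p).
  { exists (fun z => z = p). repeat split; [|intros z ->; exact Xp].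
    intros [U [V [_ [_ [_ [[a [-> Ua]] [[b [-> Vb]] Hd]]]]]]]. exact (Hd p eq_refl Ua Vb). }
  exists K. split; [|exact Kp]. split; [now exists p|]. split.
  { intros z [C [_ [HC [_ Cz]]]]. auto. }
  split.
  - (* a separation of [K] would separate some connected [C] through [p] *)
    assert (Hsep : forall U V, is_open U -> is_open V ->
              (forall w, K w -> U w \/ V w) -> (forall w, K w -> U w -> V w -> False) ->
              forall z, K z -> U p -> V z -> False).
    { intros U V HU HV Hcov Hd z [C [HC [HCX [Cp Cz]]]] Up Vz. apply HC.
      exists U, V. split; [easy|]. split; [easy|]. split.
      { intros w Cw. apply Hcov. now exists C. }
      split; [now exists p|]. split; [now exists z|].
      intros w Cw. apply Hd. now exists C. }
    intros [U [V [HU [HV [Hcov [[a [Ka Ua]] [[b [Kb Vb]] Hd]]]]]]].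
    destruct (Hcov p Kp) as [Up|Vp].
    + exact (Hsep U V HU HV Hcov Hd b Kb Up Vb).
    + refine (Hsep V U HV HU _ _ a Ka Vp Ua).
      * intros w Kw. now apply or_comm, Hcov.
      * intros w Kw Vw Uw. exact (Hd w Kw Uw Vw).
  - intros K' HK' Hsub HX z K'z. exists K'. repeat split; auto.
Qed.

Lemma boundary_set_eq (S T : aset) p : set_eq S T -> boundary S p -> boundary T p.
Proof.
  intros E Hb e He. destruct (Hb e He) as [[q [Hq Sq]] [r [Hr Sr]]].
  split; [exists q; split; [exact Hq|now apply E]|].
  exists r. split; [exact Hr|]. intros Tr. exact (Sr (proj2 (E r) Tr)).
Qed.

Lemma continuity_eps (f : R -> R) x eps : continuity f -> eps > 0 ->
  exists a, a > 0 /\ forall y, Rabs (y - x) < a -> Rabs (f y - f x) < eps.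
Proof.
  intros Hf He. destruct (Hf x eps He) as [a [Ha Hy]]. exists a. split; [exact Ha|].
  intros y Hyx. destruct (Req_dec x y) as [<-|Hxy].
  - replace (f x - f x) with 0 by ring. rewrite Rabs_R0. lra.
  - apply Hy. split; [split; [exact I|exact Hxy]|exact Hyx].
Qed.

(* The first time a continuous function on [0, 1] reaches the value [c]:
   the supremum of the times before which it stays below [c]. *)
Lemma first_exit (phi : R -> R) c :
  continuity phi -> phi 0 < c -> c <= phi 1 ->
  exists m, 0 < m <= 1 /\ c <= phi m /\ forall mu, 0 <= mu < m -> phi mu < c.
Proof.
  intros Hc H0 H1.
  set (E := fun l => l <= 1 /\ forall mu, 0 <= mu <= l -> phi mu < c).
  assert (E0 : E 0).
  { split; [lra|]. intros mu Hmu. now replace mu with 0 by lra. }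
  assert (Eb : bound E) by (exists 1; now intros l [Hl _]).
  destruct (completeness E Eb (ex_intro _ 0 E0)) as [m [Hub Hlub]].
  assert (Hm0 : 0 <= m) by now apply Hub.
  assert (Hm1 : m <= 1) by (apply Hlub; now intros l [Hl _]).
  assert (Hbelow : forall mu, 0 <= mu < m -> phi mu < c).
  { intros mu Hmu. apply NNPP. intros Hno.
    enough (m <= mu) by lra. apply Hlub. intros l [Hl1 Hl2].
    destruct (Rle_dec l mu) as [|Hlt]; [easy|]. exfalso. apply Hno, Hl2. lra. }
  assert (Hat : c <= phi m).
  { apply Rnot_lt_le. intros Hlt.
    destruct (continuity_eps phi m (c - phi m) Hc) as [a [Ha Hnear]]; [lra|].
    assert (Hm1' : m < 1) by (destruct (Req_dec m 1) as [->|]; lra).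
    (* [phi] stays below [c] a little beyond [m], contradicting maximality *)
    set (l := Rmin 1 (m + a / 2)).
    assert (El : E l).
    { split; [apply Rmin_l|]. intros mu Hmu.
      destruct (Rlt_dec mu m); [apply Hbelow; lra|].
      assert (l <= m + a / 2) by apply Rmin_r.
      specialize (Hnear mu ltac:(rewrite Rabs_right; lra)).
      apply Rabs_def2 in Hnear. lra. }
    assert (l <= m) by now apply Hub.
    unfold l, Rmin in *. destruct (Rle_dec 1 (m + a / 2)); lra. }
  exists m. repeat split; try easy.
  destruct (Req_dec m 0) as [Hz|]; [rewrite Hz in Hat; lra|lra].
Qed.

Lemma continuous_along (h : pt -> R) (g : R -> pt) K :
  continuous_on_A h -> 0 <= K ->
  (forall s t, de (g s) (g t) <= K * Rabs (s - t)) ->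
  continuity (fun t => h (g t)).
Proof.
  intros h_cont HK Hg t0 eps Heps.
  destruct (h_cont (g t0) eps Heps) as [del [Hdel Hd]].
  exists (del / (K + 1)). split; [apply Rdiv_lt_0_compat; lra|].
  intros t [_ Ht]. simpl in *. unfold R_dist in *. apply Hd.
  eapply Rle_lt_trans; [apply d_le_de|]. eapply Rle_lt_trans; [apply Hg|].
  rewrite Rabs_minus_sym. pose proof (Rabs_pos (t - t0)).
  apply Rle_lt_trans with ((K + 1) * Rabs (t - t0)); [nra|].
  apply Rmult_lt_reg_r with (/ (K + 1)); [apply Rinv_0_lt_compat; lra|].
  replace ((K + 1) * Rabs (t - t0) * / (K + 1)) with (Rabs (t - t0)) by (field; lra).
  unfold Rdiv in Ht. nra.
Qed.

Definition seg (p q : pt) (t : R) : pt :=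
  (fst p + t * (fst q - fst p), snd p + t * (snd q - snd p)).

Lemma seg_lip p q s t : de (seg p q s) (seg p q t) <= Rabs (s - t) * de p q.
Proof.
  unfold de, seg; simpl. pose proof (Rabs_pos (s - t)).
  pose proof (Rmax_l (Rabs (fst p - fst q)) (Rabs (snd p - snd q))).
  pose proof (Rmax_r (Rabs (fst p - fst q)) (Rabs (snd p - snd q))).
  replace (fst p + s * (fst q - fst p) - (fst p + t * (fst q - fst p)))
    with ((s - t) * - (fst p - fst q)) by ring.
  replace (snd p + s * (snd q - snd p) - (snd p + t * (snd q - snd p)))
    with ((s - t) * - (snd p - snd q)) by ring.
  rewrite !Rabs_mult, !Rabs_Ropp.
  apply Rmax_lub; apply Rmult_le_compat_l; lra.
Qed.

Lemma seg0 p q : seg p q 0 = p.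
Proof. destruct p. unfold seg; simpl. f_equal; ring. Qed.

Lemma seg1 p q : seg p q 1 = q.
Proof. destruct p, q. unfold seg; simpl. f_equal; ring. Qed.

(** Level sets of a lift [h : A -> R] of degree one in the vertical direction. *)

Section LevelSets.

Variable h : pt -> R.
Hypothesis h_wd : forall x y, h (x + 1, y) = h (x, y).
Hypothesis h_cont : continuous_on_A h.
Hypothesis h_lift : forall x y, h (x, y + 1) = h (x, y) + 1.

Lemma h_shiftZ q n : h (shx q n) = h q.
Proof.
  assert (HN : forall x y k, h (x + INR k, y) = h (x, y)).
  { intros x y k. induction k as [|k IH]; [simpl; now rewrite Rplus_0_r|].
    rewrite S_INR, <- Rplus_assoc. now rewrite h_wd. }
  destruct q as [x y]. unfold shx; simpl. destruct n as [|k|k]; simpl.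
  - now rewrite Rplus_0_r.
  - now rewrite <- positive_nat_Z, <- INR_IZR_INZ.
  - rewrite <- (HN (x + IZR (Z.neg k)) y (Pos.to_nat k)).
    rewrite INR_IZR_INZ, positive_nat_Z, <- Pos2Z.opp_pos, opp_IZR.
    do 2 f_equal. ring.
Qed.

Lemma h_liftN x y k : h (x, y + INR k) = h (x, y) + INR k.
Proof.
  induction k as [|k IH]; [simpl; now rewrite !Rplus_0_r|].
  rewrite S_INR, <- Rplus_assoc, h_lift, IH. ring.
Qed.

Lemma sublevel_open c : is_open (fun z => h z < c).
Proof.
  intros p Hp. destruct (h_cont p (c - h p)) as [del [Hd Hnear]]; [lra|].
  exists del. split; [exact Hd|]. intros q Hq.
  specialize (Hnear q Hq). apply Rabs_def2 in Hnear. lra.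
Qed.

Lemma superlevel_open c : is_open (fun z => h z > c).
Proof.
  intros p Hp. destruct (h_cont p (h p - c)) as [del [Hd Hnear]]; [lra|].
  exists del. split; [exact Hd|]. intros q Hq.
  specialize (Hnear q Hq). apply Rabs_def2 in Hnear. lra.
Qed.

Lemma sublevel_boundary_level c s : boundary (fun z => h z < c) s -> h s = c.
Proof.
  intros Hb. destruct (Rtotal_order (h s) c) as [Hl|[He|Hg]]; [exfalso| |exfalso].
  - destruct (sublevel_open c s Hl) as [del [Hd Hin]].
    destruct (Hb del Hd) as [_ [z [Hz Hout]]]. exact (Hout (Hin z Hz)).
  - exact He.
  - destruct (superlevel_open c s Hg) as [del [Hd Hin]].
    destruct (Hb del Hd) as [[z [Hz Hbelow]] _]. specialize (Hin z Hz). lra.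
Qed.

(* Walking from [p] (below [c]) to [q] (not below [c]) along a shortest
   segment, one meets the boundary of {h < c} within distance [d p q] of
   both endpoints. *)
Lemma first_crossing p q c :
  h p < c -> c <= h q ->
  exists s, boundary (fun z => h z < c) s /\ d p s <= d p q /\ d q s <= d p q.
Proof.
  intros Hp Hq. destruct (d_rep p q) as [n Hn]. set (q' := shx q n) in *.
  pose proof (de_nonneg p q') as HD. set (D := de p q') in *.
  assert (Hphi : continuity (fun t => h (seg p q' t))).
  { apply (continuous_along h (seg p q') D h_cont HD).
    intros s t. rewrite Rmult_comm. apply seg_lip. }
  destruct (first_exit _ c Hphi) as [m [Hm [Hat Hbelow]]].
  { now rewrite seg0. }
  { rewrite seg1. unfold q'. now rewrite h_shiftZ. }
  exists (seg p q' m). split; [|split].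
  - intros e He. split; [|exists (seg p q' m); rewrite d_refl; split; lra].
    set (k := Rmin m (e / (D + 1)) / 2).
    assert (Hk : 0 < k /\ k <= m / 2 /\ k <= e / (D + 1) / 2).
    { assert (0 < e / (D + 1)) by (apply Rdiv_lt_0_compat; lra).
      pose proof (Rmin_l m (e / (D + 1))). pose proof (Rmin_r m (e / (D + 1))).
      assert (0 < Rmin m (e / (D + 1))) by (apply Rmin_glb_lt; lra). unfold k. lra. }
    exists (seg p q' (m - k)). split.
    + eapply Rle_lt_trans; [apply d_le_de|]. eapply Rle_lt_trans; [apply seg_lip|].
      replace (m - (m - k)) with k by ring. rewrite Rabs_right by lra.
      apply Rle_lt_trans with (e / (D + 1) / 2 * D); [apply Rmult_le_compat_r; lra|].
      apply Rmult_lt_reg_r with (D + 1); [lra|].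
      replace (e / (D + 1) / 2 * D * (D + 1)) with (e * D / 2) by (field; lra). nra.
    + apply Hbelow. lra.
  - rewrite <- Hn, <- (seg0 p q') at 1. eapply Rle_trans; [apply d_le_de|].
    eapply Rle_trans; [apply seg_lip|]. rewrite Rabs_minus_sym, Rminus_0_r, Rabs_right by lra.
    fold D. nra.
  - rewrite <- Hn, <- (d_shift_l q _ n). fold q'. rewrite <- (seg1 p q') at 1.
    eapply Rle_trans; [apply d_le_de|]. eapply Rle_trans; [apply seg_lip|].
    rewrite Rabs_right by lra. fold D. nra.
Qed.

Lemma crossing_up p c : h p <= c -> exists y, snd p <= y /\ h (fst p, y) = c.
Proof.
  intros Hp. destruct (INR_unbounded (c - h p)) as [k Hk]. pose proof (pos_INR k).
  destruct p as [x y0]; simpl in *.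
  assert (Hvert : continuity (fun t => h (x, t))).
  { apply (continuous_along h (fun t => (x, t)) 1 h_cont); [lra|]. intros s t.
    rewrite Rmult_1_l. apply Rmax_lub; simpl; [rewrite Rminus_diag, Rabs_R0; apply Rabs_pos|lra]. }
  destruct (Continuity.IVT_gen _ y0 (y0 + INR k) c Hvert) as [y [Hy Hyc]].
  - rewrite h_liftN, Rmin_left, Rmax_right; lra.
  - exists y. rewrite Rmin_left in Hy by lra. split; [lra|exact Hyc].
Qed.

Lemma crossing_down p c : c <= h p -> exists y, y <= snd p /\ h (fst p, y) = c.
Proof.
  intros Hp. destruct (INR_unbounded (h p - c)) as [k Hk]. pose proof (pos_INR k).
  destruct p as [x y0]; simpl in *.
  assert (Hvert : continuity (fun t => h (x, t))).
  { apply (continuous_along h (fun t => (x, t)) 1 h_cont); [lra|]. intros s t.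
    rewrite Rmult_1_l. apply Rmax_lub; simpl; [rewrite Rminus_diag, Rabs_R0; apply Rabs_pos|lra]. }
  assert (Hlow : h (x, y0 - INR k) = h (x, y0) - INR k).
  { pose proof (h_liftN x (y0 - INR k) k) as E.
    replace (y0 - INR k + INR k) with y0 in E by ring. lra. }
  destruct (Continuity.IVT_gen _ (y0 - INR k) y0 c Hvert) as [y [Hy Hyc]].
  - rewrite Hlow, Rmin_left, Rmax_right; lra.
  - exists y. rewrite Rmax_right in Hy by lra. split; [lra|exact Hyc].
Qed.

(* From now on every level set lies in a horizontal band; this holds when the
   level sets are compact (see [levels_bounded_of_compact] below). *)
Hypothesis levels_bounded :
  forall c, exists M, forall p, h p = c -> Rabs (snd p) <= M.

(* Hence so does every slab {c - 1 <= h <= c}: the vertical line through one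
   of its points meets [A_c] above it and [A_(c-1)] below it. *)
Lemma slab_bounded c : exists M, forall p, c - 1 <= h p <= c -> Rabs (snd p) <= M.
Proof.
  destruct (levels_bounded c) as [M0 H0]. destruct (levels_bounded (c - 1)) as [M1 H1].
  exists (Rmax M0 M1). intros p [Hp1 Hp2]. apply Rabs_le_between.
  destruct (crossing_up p c Hp2) as [y [Hy Hyc]].
  destruct (crossing_down p (c - 1) Hp1) as [y' [Hy' Hyc']].
  apply H0, Rabs_le_between in Hyc. apply H1, Rabs_le_between in Hyc'. simpl in *.
  pose proof (Rmax_l M0 M1). pose proof (Rmax_r M0 M1). lra.
Qed.

Lemma near_boundary_from_below xi eps : eps > 0 ->
  exists del, del > 0 /\ forall p, xi - del < h p < xi ->
    exists s, boundary (fun z => h z < xi) s /\ d p s < eps.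
Proof.
  intros He. destruct (slab_bounded xi) as [M HM].
  (* a radius around [t] is admissible if [t] is above [xi], or if [h] stays
     well below [xi] on the ball *)
  set (P := fun t del => del <= eps / 2 /\
    (xi <= h t \/ (del <= xi - h t /\
                   forall q, d t q < del -> Rabs (h q - h t) < (xi - h t) / 2))).
  destruct (band_gauge P M) as [d0 [Hd0 Hunif]].
  { intros t. destruct (Rle_dec xi (h t)) as [Ht|Ht].
    - exists (eps / 2). split; [lra|]. split; [lra|now left].
    - destruct (h_cont t ((xi - h t) / 2)) as [r [Hr Hnear]]; [lra|].
      exists (Rmin (eps / 2) (Rmin r (xi - h t))).
      pose proof (Rmin_l (eps / 2) (Rmin r (xi - h t))).
      pose proof (Rmin_r (eps / 2) (Rmin r (xi - h t))).
      pose proof (Rmin_l r (xi - h t)). pose proof (Rmin_r r (xi - h t)).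
      split; [repeat apply Rmin_glb_lt; lra|]. split; [lra|]. right.
      split; [lra|]. intros q Hq. apply Hnear. lra. }
  exists (Rmin (d0 / 2) 1). split; [apply Rmin_glb_lt; lra|]. intros p [Hp1 Hp2].
  pose proof (Rmin_l (d0 / 2) 1). pose proof (Rmin_r (d0 / 2) 1).
  destruct (Hunif p (HM p ltac:(lra))) as [t [del [[Hdel HPt] [Hd0del Hpt]]]].
  destruct HPt as [Ht|[Hdel' Hnear]].
  - destruct (first_crossing p t xi Hp2 Ht) as [s [Hs [Hps _]]].
    exists s. split; [exact Hs|lra].
  - exfalso. rewrite d_sym in Hpt. specialize (Hnear p Hpt).
    apply Rabs_def2 in Hnear. lra.
Qed.

Lemma boundary_pushdown xi eps : eps > 0 ->
  exists del, del > 0 /\ forall q, boundary (fun z => h z < xi) q ->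
    exists r, d q r < eps /\ h r <= xi - del.
Proof.
  intros He. destruct (slab_bounded xi) as [M HM].
  (* a radius around [t] is admissible if it is at most the depth of some
     point below [xi] near [t], or if there is no point below [xi] near [t] *)
  set (P := fun t del => del <= eps / 4 /\
    ((exists r, d t r < eps / 2 /\ h r <= xi - del) \/
     (forall r, d t r < eps / 2 -> xi <= h r))).
  destruct (band_gauge P M) as [d0 [Hd0 Hunif]].
  { intros t. destruct (classic (exists r, d t r < eps / 2 /\ h r < xi))
      as [[r [Hr Hhr]]|Hno].
    - exists (Rmin (eps / 4) (xi - h r)).
      pose proof (Rmin_l (eps / 4) (xi - h r)). pose proof (Rmin_r (eps / 4) (xi - h r)).
      split; [apply Rmin_glb_lt; lra|]. split; [lra|]. left. exists r. split; lra.
    - exists (eps / 4). split; [lra|]. split; [lra|]. right.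
      intros r Hr. apply Rnot_lt_le. intros Hhr. apply Hno. now exists r. }
  exists d0. split; [exact Hd0|]. intros q Hq.
  pose proof (sublevel_boundary_level xi q Hq) as Hqxi.
  destruct (Hunif q (HM q ltac:(lra))) as [t [del [[Hdel HPt] [Hd0del Hqt]]]].
  destruct HPt as [[r [Hr Hhr]]|Habove].
  - exists r. pose proof (d_tri q t r). split; lra.
  - exfalso. destruct (Hq (eps / 4)) as [[z [Hz Hzb]] _]; [lra|].
    pose proof (d_tri t q z). rewrite (d_sym t q) in *.
    specialize (Habove z ltac:(lra)). lra.
Qed.

Lemma levels_below_close xi eps : eps > 0 ->
  exists del, del > 0 /\ forall xi', xi - del < xi' < xi ->
    (forall x, h x = xi' -> dist_le x (boundary (fun z => h z < xi)) eps) /\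
    (forall y, boundary (fun z => h z < xi) y ->
       exists s, boundary (fun z => h z < xi') s /\ d y s < eps).
Proof.
  intros He.
  destruct (near_boundary_from_below xi eps He) as [d1 [Hd1 Hnear]].
  destruct (boundary_pushdown xi eps He) as [d2 [Hd2 Hpush]].
  exists (Rmin d1 d2). split; [now apply Rmin_glb_lt|]. intros xi' Hxi'.
  pose proof (Rmin_l d1 d2). pose proof (Rmin_r d1 d2). split.
  - intros x Hx r' Hr'. destruct (Hnear x) as [s [Hs Hxs]]; [lra|].
    exists s. split; [exact Hs|lra].
  - (* go down to level [xi - d2] and come back up to the first crossing
       of level [xi'] *)
    intros y Hy. destruct (Hpush y Hy) as [r [Hyr Hr]].
    pose proof (sublevel_boundary_level xi y Hy).
    destruct (first_crossing r y xi') as [s [Hs [_ Hys]]]; [lra|lra|].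
    exists s. split; [exact Hs|]. rewrite d_sym in Hyr. lra.
Qed.

Lemma sublevel_boundary_limits xi :
  hlim_left (fun c => boundary (fun z => h z < c)) xi (boundary (fun z => h z < xi)) /\
  hlim_left (level h) xi (boundary (fun z => h z < xi)).
Proof.
  split; intros eps He; destruct (levels_below_close xi eps He) as [del [Hdel Hclose]];
    exists del; split; try exact Hdel; intros xi' Hxi';
    destruct (Hclose xi' Hxi') as [Hlev Hbd]; split.
  - intros x Hx. apply Hlev, sublevel_boundary_level, Hx.
  - intros y Hy r' Hr'. destruct (Hbd y Hy) as [s [Hs Hys]].
    exists s. split; [exact Hs|lra].
  - exact Hlev.
  - intros y Hy r' Hr'. destruct (Hbd y Hy) as [s [Hs Hys]].
    exists s. split; [apply sublevel_boundary_level, Hs|lra].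
Qed.

Lemma connected_same_side c K :
  connected K -> (forall p, K p -> h p <> c) ->
  forall p q, K p -> K q -> h p < c -> h q < c.
Proof.
  intros HK Hne p q Kp Kq Hp. apply Rnot_ge_lt. intros Hq. apply HK.
  exists (fun z => h z < c), (fun z => h z > c).
  split; [apply sublevel_open|]. split; [apply superlevel_open|].
  split; [intros z Kz; specialize (Hne z Kz); lra|].
  split; [now exists p|]. split; [exists q; specialize (Hne q Kq); split; [easy|lra]|].
  intros z _ H1 H2. lra.
Qed.

(* A connected set avoiding [A_c] and unbounded above lies in {h > c}: it
   reaches above the band containing [A_c], where [h > c]. *)
Lemma unbounded_above_gt c S :
  connected S -> subset S (compl (level h c)) -> unbounded_above S ->
  forall q, S q -> h q > c.
Proof.
  intros HS Hav Hub q Sq. destruct (levels_bounded c) as [M HM].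
  destruct (Hub M) as [p [Sp Hp]].
  assert (Hne : forall z, S z -> h z <> c) by exact Hav.
  assert (Hpc : h p > c).
  { apply Rnot_le_gt. intros Hle. destruct (crossing_up p c Hle) as [y [Hy Hyc]].
    apply HM, Rabs_le_between in Hyc. simpl in Hyc. lra. }
  apply Rnot_le_gt. intros Hle. destruct (Rle_lt_or_eq_dec _ _ Hle) as [Hlt|Heq].
  - pose proof (connected_same_side c S HS Hne q p Sq Sp Hlt). lra.
  - exact (Hne q Sq Heq).
Qed.

Lemma unbounded_below_lt c S :
  connected S -> subset S (compl (level h c)) -> unbounded_below S ->
  forall q, S q -> h q < c.
Proof.
  intros HS Hav Hub q Sq. destruct (levels_bounded c) as [M HM].
  destruct (Hub (- M)) as [p [Sp Hp]].
  assert (Hne : forall z, S z -> h z <> c) by exact Hav.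
  assert (Hpc : h p < c).
  { apply Rnot_le_lt. intros Hle. destruct (crossing_down p c Hle) as [y [Hy Hyc]].
    apply HM, Rabs_le_between in Hyc. simpl in Hyc. lra. }
  exact (connected_same_side c S HS Hne p q Sp Sq Hpc).
Qed.

Lemma essential_level_components c :
  essential_annular_continuum (level h c) ->
  exists Up Um, set_eq Up (fun z => h z > c) /\ set_eq Um (fun z => h z < c) /\
    forall K, component (compl (level h c)) K -> set_eq K Up \/ set_eq K Um.
Proof.
  intros [_ [Up [Um [[_ [HpS [HpC _]]] [[_ [HmS [HmC _]]] [_ [Hall [Hpa Hmb]]]]]]]].
  pose proof (unbounded_above_gt c Up HpC HpS Hpa) as Hup.
  pose proof (unbounded_below_lt c Um HmC HmS Hmb) as Hum.
  (* a point off [A_c] lies in a component, which must be [Up] or [Um] *)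
  assert (Hcomp : forall p, h p <> c -> Up p \/ Um p).
  { intros p Hp. destruct (component_exists (compl (level h c)) p Hp) as [K [HK Kp]].
    destruct (Hall K HK) as [E|E]; [left|right]; now apply E. }
  exists Up, Um. split; [|split; [|exact Hall]]; intros p; split.
  - apply Hup.
  - intros Hp. destruct (Hcomp p ltac:(lra)) as [|Um_p]; [easy|].
    specialize (Hum p Um_p). lra.
  - apply Hum.
  - intros Hp. destruct (Hcomp p ltac:(lra)) as [Up_p|]; [|easy].
    specialize (Hup p Up_p). lra.
Qed.

Lemma Uminus_sublevel c U :
  essential_annular_continuum (level h c) ->
  is_Uminus (level h c) U -> set_eq U (fun z => h z < c).
Proof.
  intros Hess [HU HUb]. destruct (essential_level_components c Hess) as [Up [Um [Ep [Em Hall]]]].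
  pose proof HU as [[u Uu] [HUS [HUC _]]].
  pose proof (unbounded_below_lt c U HUC HUS HUb u Uu).
  destruct (Hall U HU) as [E|E].
  - exfalso. apply E, Ep in Uu. lra.
  - intros p. rewrite (E p). apply Em.
Qed.

Lemma Uplus_superlevel c U :
  essential_annular_continuum (level h c) ->
  is_Uplus (level h c) U -> set_eq U (fun z => h z > c).
Proof.
  intros Hess [HU HUb]. destruct (essential_level_components c Hess) as [Up [Um [Ep [Em Hall]]]].
  pose proof HU as [[u Uu] [HUS [HUC _]]].
  pose proof (unbounded_above_gt c U HUC HUS HUb u Uu).
  destruct (Hall U HU) as [E|E].
  - intros p. rewrite (E p). apply Ep.
  - exfalso. apply E, Em in Uu. lra.
Qed.

Lemma Aminus_sublevel c p :
  essential_annular_continuum (level h c) ->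
  Aminus (level h c) p <-> boundary (fun z => h z < c) p.
Proof.
  intros Hess. split.
  - intros [U [HU Hb]]. exact (boundary_set_eq _ _ p (Uminus_sublevel c U Hess HU) Hb).
  - intros Hb. pose proof Hess as [_ [Up [Um [_ [HUm [_ [_ [_ Hmb]]]]]]]].
    exists Um. split; [now split|]. apply (boundary_set_eq (fun z => h z < c)); [|exact Hb].
    intros z. symmetry. apply (Uminus_sublevel c Um Hess). now split.
Qed.

Lemma Aplus_superlevel c p :
  essential_annular_continuum (level h c) ->
  Aplus (level h c) p <-> boundary (fun z => h z > c) p.
Proof.
  intros Hess. split.
  - intros [U [HU Hb]]. exact (boundary_set_eq _ _ p (Uplus_superlevel c U Hess HU) Hb).
  - intros Hb. pose proof Hess as [_ [Up [Um [HUp [_ [_ [_ [Hpa _]]]]]]]].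
    exists Up. split; [now split|]. apply (boundary_set_eq (fun z => h z > c)); [|exact Hb].
    intros z. symmetry. apply (Uplus_superlevel c Up Hess). now split.
Qed.

End LevelSets.

(** Transfer of Hausdorff limits. *)

Definition flip (p : pt) : pt := (fst p, - snd p).

Lemma flip_involutive p : flip (flip p) = p.
Proof. destruct p. unfold flip; simpl. now rewrite Ropp_involutive. Qed.

Lemma d_flip p q : d (flip p) (flip q) = d p q.
Proof.
  unfold d, flip; simpl. f_equal.
  replace (- snd p - - snd q) with (- (snd p - snd q)) by ring. apply Rabs_Ropp.
Qed.

Lemma boundary_flip (S T : aset) p :
  (forall z, S z <-> T (flip z)) -> boundary S p <-> boundary T (flip p).
Proof.
  intros E. split.
  - intros Hb e He. destruct (Hb e He) as [[q [Hq Sq]] [r [Hr Sr]]].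
    split; [exists (flip q)|exists (flip r)]; rewrite d_flip, <- E; now split.
  - intros Hb e He. destruct (Hb e He) as [[q [Hq Tq]] [r [Hr Tr]]].
    split; [exists (flip q)|exists (flip r)]; rewrite <- d_flip, flip_involutive, E,
      flip_involutive; now split.
Qed.

Lemma hausdorff_le_isometry (f : pt -> pt) (S T S' T' : aset) e :
  (forall p, f (f p) = p) -> (forall p q, d (f p) (f q) = d p q) ->
  (forall z, S z <-> S' (f z)) -> (forall z, T z <-> T' (f z)) ->
  hausdorff_le S T e -> hausdorff_le S' T' e.
Proof.
  intros Hinv Hiso ES ET [H1 H2].
  assert (Hmove : forall x y, d x (f y) = d (f x) y).
  { intros x y. now rewrite <- Hiso, Hinv. }
  split.
  - intros x Hx r' Hr'. destruct (H1 (f x)) with r' as [y [Ty Hy]];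
      [apply ES; now rewrite Hinv|exact Hr'|].
    exists (f y). rewrite Hmove, <- ET. now split.
  - intros x Hx r' Hr'. destruct (H2 (f x)) with r' as [y [Sy Hy]];
      [apply ET; now rewrite Hinv|exact Hr'|].
    exists (f y). rewrite Hmove, <- ES. now split.
Qed.

Lemma hlim_left_ext (F G : R -> aset) xi (L L' : aset) :
  (forall c z, F c z <-> G c z) -> (forall z, L z <-> L' z) ->
  hlim_left F xi L -> hlim_left G xi L'.
Proof.
  intros EF EL Hlim eps He. destruct (Hlim eps He) as [del [Hdel H]].
  exists del. split; [exact Hdel|]. intros c Hc.
  exact (hausdorff_le_isometry (fun p => p) _ _ _ _ eps (fun _ => eq_refl)
           (fun _ _ => eq_refl) (EF c) EL (H c Hc)).
Qed.

Lemma hlim_right_ext (F G : R -> aset) xi (L L' : aset) :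
  (forall c z, F c z <-> G c z) -> (forall z, L z <-> L' z) ->
  hlim_right F xi L -> hlim_right G xi L'.
Proof.
  intros EF EL Hlim eps He. destruct (Hlim eps He) as [del [Hdel H]].
  exists del. split; [exact Hdel|]. intros c Hc.
  exact (hausdorff_le_isometry (fun p => p) _ _ _ _ eps (fun _ => eq_refl)
           (fun _ _ => eq_refl) (EF c) EL (H c Hc)).
Qed.

Lemma hlim_right_of_flip (F G : R -> aset) xi (L L' : aset) :
  (forall c z, F c z <-> G (- c) (flip z)) -> (forall z, L z <-> L' (flip z)) ->
  hlim_left G (- xi) L' -> hlim_right F xi L.
Proof.
  intros EF EL Hlim eps He. destruct (Hlim eps He) as [del [Hdel H]].
  exists del. split; [exact Hdel|]. intros c Hc.
  refine (hausdorff_le_isometry flip _ _ _ _ eps flip_involutive d_flip _ _ (H (- c) _));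
    [| |lra]; intros z; rewrite ?EF, ?EL, flip_involutive; reflexivity.
Qed.

(* Limits from the right, obtained from [sublevel_boundary_limits] applied to
   the reflected function [p |-> - h (flip p)]. *)
Lemma superlevel_boundary_limits (h : pt -> R)
  (h_wd : forall x y, h (x + 1, y) = h (x, y))
  (h_cont : continuous_on_A h)
  (h_lift : forall x y, h (x, y + 1) = h (x, y) + 1)
  (h_bounded : forall c, exists M, forall p, h p = c -> Rabs (snd p) <= M) xi :
  hlim_right (fun c => boundary (fun z => h z > c)) xi (boundary (fun z => h z > xi)) /\
  hlim_right (level h) xi (boundary (fun z => h z > xi)).
Proof.
  set (g := fun p => - h (flip p)).
  assert (g_wd : forall x y, g (x + 1, y) = g (x, y)).
  { intros x y. unfold g, flip; simpl. now rewrite h_wd. }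
  assert (g_lift : forall x y, g (x, y + 1) = g (x, y) + 1).
  { intros x y. unfold g, flip; simpl. pose proof (h_lift x (- (y + 1))) as E.
    replace (- (y + 1) + 1) with (- y) in E by ring. lra. }
  assert (g_cont : continuous_on_A g).
  { intros p eps He. destruct (h_cont (flip p) eps He) as [del [Hd Hnear]].
    exists del. split; [exact Hd|]. intros q Hq. rewrite <- d_flip in Hq.
    unfold g. rewrite <- Rabs_Ropp. replace (- (- h (flip q) - - h (flip p)))
      with (h (flip q) - h (flip p)) by ring. exact (Hnear _ Hq). }
  assert (g_bounded : forall c, exists M, forall p, g p = c -> Rabs (snd p) <= M).
  { intros c. destruct (h_bounded (- c)) as [M HM]. exists M. intros p Hp.
    specialize (HM (flip p) ltac:(unfold g in Hp; lra)).
    unfold flip in HM; simpl in HM. now rewrite Rabs_Ropp in HM. }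
  assert (Hbd : forall c z, boundary (fun w => h w > c) z <->
                            boundary (fun w => g w < - c) (flip z)).
  { intros c z. apply boundary_flip. intros w. unfold g. rewrite flip_involutive.
    split; intros; lra. }
  destruct (sublevel_boundary_limits g g_wd g_cont g_lift g_bounded (- xi)) as [L1 L2].
  split.
  - eapply hlim_right_of_flip; [| |exact L1]; intros; apply Hbd.
  - eapply hlim_right_of_flip; [| |exact L2]; intros; [|apply Hbd].
    unfold level, g. rewrite flip_involutive. split; intros; lra.
Qed.

Lemma compact_bounded (X : aset) :
  compact X -> exists M, forall p, X p -> Rabs (snd p) <= M.
Proof.
  intros HX. destruct (HX nat (fun n q => Rabs (snd q) < INR n)) as [l Hl].
  - intros n p Hp. exists (INR n - Rabs (snd p)). split; [lra|].
    intros q Hq. pose proof (dy_le_d q p) as Hy. rewrite d_sym in Hy.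
    pose proof (Rabs_triang (snd q - snd p) (snd p)).
    replace (snd q - snd p + snd p) with (snd q) in * by ring. lra.
  - intros p _. destruct (INR_unbounded (Rabs (snd p))) as [n Hn]. now exists n.
  - assert (Hmax : exists N, forall i, In i l -> (i <= N)%nat).
    { clear Hl. induction l as [|a l [N HN]]; [now exists 0%nat|].
      exists (Nat.max a N). intros i [->|Hi]; [lia|]. specialize (HN i Hi). lia. }
    destruct Hmax as [N HN]. exists (INR N). intros p Hp.
    destruct (Hl p Hp) as [i [Hi Hpi]]. pose proof (le_INR _ _ (HN i Hi)). lra.
Qed.

Theorem mainTheorem14 (h : pt -> R)
  (h_wd : forall x y, h (x + 1, y) = h (x, y))
  (h_cont : continuous_on_A h)
  (h_lift : forall x y, h (x, y + 1) = h (x, y) + 1)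
  (h_ess : forall xi, essential_annular_continuum (level h xi))
  (xi : R)
  (h_thin : thin (level h xi)) :
  hlim_left (fun xi' => Aminus (level h xi')) xi (Aminus (level h xi)) /\
  hlim_left (fun xi' => level h xi') xi (Aminus (level h xi)) /\
  hlim_right (fun xi' => Aplus (level h xi')) xi (Aplus (level h xi)) /\
  hlim_right (fun xi' => level h xi') xi (Aplus (level h xi)).
Proof.
  assert (h_bounded : forall c, exists M, forall p, h p = c -> Rabs (snd p) <= M).
  { intros c. destruct (h_ess c) as [[_ [Hc _]] _]. exact (compact_bounded _ Hc). }
  destruct (sublevel_boundary_limits h h_wd h_cont h_lift h_bounded xi) as [Lbd Llev].
  destruct (superlevel_boundary_limits h h_wd h_cont h_lift h_bounded xi) as [Rbd Rlev].
  pose proof (fun c p => Aminus_sublevel h h_cont h_lift h_bounded c p (h_ess c)) as Em.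
  pose proof (fun c p => Aplus_superlevel h h_cont h_lift h_bounded c p (h_ess c)) as Ep.
  split; [|split; [|split]].
  - eapply hlim_left_ext; [| |exact Lbd]; intros; symmetry; apply Em.
  - eapply hlim_left_ext; [| |exact Llev]; intros; [reflexivity|symmetry; apply Em].
  - eapply hlim_right_ext; [| |exact Rbd]; intros; symmetry; apply Ep.
  - eapply hlim_right_ext; [| |exact Rlev]; intros; [reflexivity|symmetry; apply Ep].
Qed.
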